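(* Let $S$ be a real skew-symmetric $d\times d$ matrix (not necessarily invertible), let $\mathcal H$ be a Hilbert space on which $\mathrm{CCR}(S)$ with canonical observables $X_1,\dots,X_d$ is represented, let $\psi\in\mathcal H$ be a cyclic unit vector for $\mathrm{CCR}(S)$, put $\psi(\xi):=e^{\sqrt{-1}\xi^iX_i}\psi$ for $\xi\in\mathbb R^d$, and for a bounded operator $A$ on $\mathcal H$ put $\varphi_A(\xi;\eta):=\langle\psi(\xi),A\psi(\eta)\rangle$. Let $D$ be a dense subset of $\mathbb R^d$ and let $\varphi:D\times D\to\mathbb C$ satisfy $0\prec\varphi\prec\varphi_I$ (with $\varphi_I$ restricted to $D\times D$). Then there exists a unique bounded operator $A$ on $\mathcal H$ with $0\le A\le I$ and $\varphi=\varphi_A$ on $D\times D$. Consequently, $\varphi$ extends continuously to $\mathbb R^d\times\mathbb R^d$.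
   Context: $\mathrm{CCR}(S)$ is the von Neumann algebra generated by unitaries $e^{\sqrt{-1}\xi^iX_i}$ satisfying $e^{\sqrt{-1}\xi^iX_i}e^{\sqrt{-1}\eta^jX_j}=e^{\sqrt{-1}\xi^\top S\eta}e^{\sqrt{-1}(\xi+\eta)^iX_i}$ (summation convention). A function $\varphi:D\times D\to\mathbb C$ is positive semidefinite, written $\varphi\succ0$, if for all $r\in\mathbb N$ and $\xi^{(1)},\dots,\xi^{(r)}\in D$ the matrix $[\varphi(\xi^{(i)};\xi^{(j)})]_{i,j}$ is positive semidefinite; $\varphi_1\succ\varphi_2$ means $\varphi_1-\varphi_2\succ0$, and $\varphi_1\prec\varphi_2$ means $\varphi_2\succ\varphi_1$. *)

From HB Require Import structures.
From mathcomp Require Import all_boot all_order all_algebra.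
From mathcomp Require Import complex.
From mathcomp Require Import reals trigo.
Set Implicit Arguments. Unset Strict Implicit. Unset Printing Implicit Defensive.
Import Order.TTheory GRing.Theory Num.Theory.
Local Open Scope ring_scope.

Section Defs.
Variable R : realType.
Local Notation C := R[i].

Definition expi (t : R) : C := Complex (cos t) (sin t).

Definition sform (d : nat) (S : 'M[R]_d) (xi eta : 'rV[R]_d) : R :=
  (xi *m S *m eta^T) 0 0.

Definition rv_close (d : nat) (xi eta : 'rV[R]_d) (delta : R) : Prop :=
  forall k : 'I_d, `|xi 0 k - eta 0 k| < delta.

Section Hilbert.
Variables (H : lmodType C) (ip : H -> H -> C).

Definition hnorm (x : H) : R := Num.sqrt (complex.Re (ip x x)).

Definition is_hilbert : Prop :=
  [/\ (forall x y z (a : C), ip x (a *: y + z) = a * ip x y + ip x z),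
      (forall x y, ip y x = (ip x y)^*),
      (forall x, 0 <= ip x x),
      (forall x, ip x x = 0 -> x = 0) &
      (forall u : nat -> H,
         (forall e : R, 0 < e -> exists N, forall m n, (N <= m)%N -> (N <= n)%N ->
             hnorm (u m - u n) < e) ->
         exists l : H, forall e : R, 0 < e -> exists N, forall n, (N <= n)%N ->
             hnorm (u n - l) < e)].

Definition linear_op (A : H -> H) : Prop :=
  forall (a : C) x y, A (a *: x + y) = a *: A x + A y.

Definition bounded_op (A : H -> H) : Prop :=
  linear_op A /\ exists M : R, forall x, hnorm (A x) <= M * hnorm x.

Definition op_between_0_I (A : H -> H) : Prop :=
  forall x, 0 <= ip x (A x) /\ ip x (A x) <= ip x x.

(* a representation of CCR(S): Weyl unitaries W xi = e^{sqrt(-1) xi^i X_i},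
   strongly continuous (so that the canonical observables X_i exist) *)
Definition ccr_rep (d : nat) (S : 'M[R]_d) (W : 'rV[R]_d -> H -> H) : Prop :=
  [/\ (forall xi, linear_op (W xi)),
      (forall xi x y, ip (W xi x) (W xi y) = ip x y),
      (forall xi y, exists x, W xi x = y),
      (forall xi eta x, W xi (W eta x) = expi (sform S xi eta) *: W (xi + eta) x) &
      (forall x xi0 (e : R), 0 < e -> exists2 delta : R, 0 < delta &
          forall xi, rv_close xi xi0 delta -> hnorm (W xi x - W xi0 x) < e)].

(* the von Neumann algebra generated by the W xi (double commutant;
   the family {W xi} is closed under adjoints up to scalars) *)
Definition in_vN (d : nat) (W : 'rV[R]_d -> H -> H) (T : H -> H) : Prop :=
  bounded_op T /\
  forall B, bounded_op B -> (forall xi x, B (W xi x) = W xi (B x)) ->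
    forall x, T (B x) = B (T x).

Definition cyclic_vec (d : nat) (W : 'rV[R]_d -> H -> H) (psi : H) : Prop :=
  forall x (e : R), 0 < e -> exists T, in_vN W T /\ hnorm (T psi - x) < e.

Definition phiA (d : nat) (W : 'rV[R]_d -> H -> H) (psi : H) (A : H -> H)
  (xi eta : 'rV[R]_d) : C := ip (W xi psi) (A (W eta psi)).
End Hilbert.

Definition psd_mx (r : nat) (M : 'M[C]_r) : Prop :=
  forall c : 'cV[C]_r, 0 <= ((map_mx Num.conj c)^T *m M *m c) 0 0.

Definition psd_kernel (d : nat) (D : 'rV[R]_d -> Prop)
  (phi : 'rV[R]_d -> 'rV[R]_d -> C) : Prop :=
  forall (r : nat) (xs : 'I_r -> 'rV[R]_d), (forall k, D (xs k)) ->
    psd_mx (\matrix_(i < r, j < r) phi (xs i) (xs j)).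

Definition dense_rv (d : nat) (D : 'rV[R]_d -> Prop) : Prop :=
  forall xi (e : R), 0 < e -> exists eta, D eta /\ rv_close xi eta e.
End Defs.

(* Let K be the closure of the span of the vectors psi(xi), xi in D.  Strong
   continuity of xi |-> psi(xi) and density of D put every psi(zeta) in K, so K
   is invariant under the Weyl unitaries and the orthogonal projection P onto K
   commutes with CCR(S); every T of the von Neumann algebra then maps psi = P psi
   into K, and cyclicity forces K = H.
   On finite combinations v_s = sum_k c_k psi(xi_k), phi defines a positive
   sesquilinear form Q dominated by the Gram form, so |Q(s,t)| <= |v_s| |v_t| by
   Cauchy-Schwarz.  Two applications of the Riesz representation on the span
   (obtained by minimising |v|^2 - 2 Re l(v), which is where completeness enters)
   yield a contraction A with <v_s, A v_t> = Q(s,t).  Positivity of Q and of the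
   Gram form minus Q extends to 0 <= A <= I by density, a bounded operator is
   determined by its matrix elements on the dense span, and phi_A is continuous
   because the Weyl unitaries are strongly continuous. *)

From HB Require Import structures.
From mathcomp Require Import all_boot all_order all_algebra.
From mathcomp Require Import complex.
From mathcomp Require Import reals trigo.
From mathcomp Require Import classical_sets boolp.
From mathcomp Require Import ring lra.
Import Order.TTheory GRing.Theory Num.Theory Normc.
Set Implicit Arguments. Unset Strict Implicit. Unset Printing Implicit Defensive.
Local Open Scope ring_scope.

Local Notation Re := (@complex.Re _).
Local Notation Im := (@complex.Im _).

Section ComplexFacts.
Variable R : realType.
Local Notation C := R[i].
Implicit Types (z w : C) (r : R).

Lemma complexRI z w : Re z = Re w -> Im z = Im w -> z = w.
Proof. by case: z => a b; case: w => c e /= -> ->. Qed.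

Lemma ReD z w : Re (z + w) = Re z + Re w. Proof. by case: z; case: w. Qed.
Lemma ImD z w : Im (z + w) = Im z + Im w. Proof. by case: z; case: w. Qed.
Lemma ReN z : Re (- z) = - Re z. Proof. by case: z. Qed.
Lemma ImN z : Im (- z) = - Im z. Proof. by case: z. Qed.
Lemma ReB z w : Re (z - w) = Re z - Re w. Proof. by rewrite ReD ReN. Qed.
Lemma ImB z w : Im (z - w) = Im z - Im w. Proof. by rewrite ImD ImN. Qed.
Lemma ReM z w : Re (z * w) = Re z * Re w - Im z * Im w.
Proof. by case: z; case: w. Qed.
Lemma ImM z w : Im (z * w) = Re z * Im w + Im z * Re w.
Proof. by case: z => a b; case: w => c e /=; ring. Qed.
Lemma ReJ z : Re z^* = Re z. Proof. by case: z. Qed.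
Lemma ImJ z : Im z^* = - Im z. Proof. by case: z. Qed.
Lemma conjC_real r : (r%:C%C : C)^* = r%:C%C. Proof. exact: conjc_real. Qed.
Lemma ReMr r z : Re (r%:C%C * z) = r * Re z. Proof. by rewrite ReM /=; ring. Qed.
Lemma ReMJ z w : Re (z^* * w) = Re (z * w^*).
Proof. by rewrite !ReM !ReJ !ImJ; ring. Qed.

Lemma normcE2 z : normc z ^+ 2 = Re z ^+ 2 + Im z ^+ 2.
Proof. by case: z => a b /=; rewrite sqr_sqrtr // addr_ge0 // sqr_ge0. Qed.
Lemma normc_ge0 z : 0 <= normc z. Proof. by case: z => a b; apply: sqrtr_ge0. Qed.
Lemma normc_conj z : normc z^* = normc z. Proof. by case: z => a b /=; rewrite sqrrN. Qed.
Lemma normr_normc z : `|z| = (normc z)%:C%C.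
Proof. by case: z => a b; rewrite normc_def. Qed.
Lemma normc_real r : normc r%:C%C = `|r|.
Proof. by rewrite /= expr0n /= addr0 sqrtr_sqr. Qed.

Lemma ler_of_sqr (a b : R) : 0 <= b -> a ^+ 2 <= b ^+ 2 -> a <= b.
Proof. by move=> b0 ab; case: (lerP a b) => // ba; nra. Qed.

Lemma ler_normc_Re z : `|Re z| <= normc z.
Proof.
apply: ler_of_sqr; first exact: normc_ge0.
by rewrite normcE2 real_normK ?num_real // lerDl sqr_ge0.
Qed.
Lemma ler_normc_Im z : `|Im z| <= normc z.
Proof.
apply: ler_of_sqr; first exact: normc_ge0.
by rewrite normcE2 real_normK ?num_real // lerDr sqr_ge0.
Qed.
Lemma ler_Re_normc z : Re z <= normc z.
Proof. exact: le_trans (ler_norm _) (ler_normc_Re z). Qed.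

Lemma mulJc z : z^* * z = (normc z ^+ 2)%:C%C.
Proof. by apply: complexRI; rewrite normcE2 ?ReM ?ImM ReJ ImJ /=; ring. Qed.

Lemma ler_Re z w : z <= w -> Re z <= Re w.
Proof. by rewrite lecE => /andP[]. Qed.

Lemma ge0_complex_closed z :
  (forall e, 0 < e -> exists2 w, 0 <= w & normc (z - w) < e) -> 0 <= z.
Proof.
move=> approx; rewrite lecE /=; apply/andP; split.
  rewrite -normr_le0; apply/ler_addgt0Pr => e /approx[w].
  rewrite lecE /= => /andP[/eqP w_real _].
  by have := ler_normc_Im (z - w); rewrite ImB w_real subr0; lra.
apply/ler_addgt0Pr => e /approx[w]; rewrite lecE /= => /andP[_ w_ge0].
have := ler_normc_Re (z - w); rewrite ReB ler_norml => /andP[+ _]; lra.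
Qed.
End ComplexFacts.

Section RealFacts.
Variable R : realType.

Lemma ler_addgt0_mulP (a b c : R) : (forall e, 0 < e -> a <= b + e * c) -> a <= b.
Proof.
move=> h; apply/ler_addgt0Pr => e e_gt0.
have [c_le0|c_gt0] := lerP c 0; first by have := h e e_gt0; nra.
by have := h (e / c) (divr_gt0 e_gt0 c_gt0); rewrite divfK ?gt_eqF.
Qed.

Lemma discriminant_le (a b c : R) : 0 <= a -> 0 <= b ->
  (forall t, 0 <= a * t ^+ 2 - 2 * b * t + c) -> b ^+ 2 <= a * c.
Proof.
move=> a_ge0 b_ge0 pos.
have [a_gt0|a_le0] := ltrP 0 a.
  have := pos (b / a); rewrite -(ler_pM2l a_gt0) mulr0.
  have -> : a * (a * (b / a) ^+ 2 - 2 * b * (b / a) + c) = a * c - b ^+ 2.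
    by field; rewrite gt_eqF.
  by rewrite subr_ge0.
have a0 : a = 0 by apply/eqP; rewrite eq_le a_le0 a_ge0.
rewrite a0 in pos *.
have [b_gt0|b_le0] := ltrP 0 b; last first.
  have -> : b = 0 by apply/eqP; rewrite eq_le b_le0 b_ge0.
  by rewrite expr0n mul0r.
have := pos ((c + 1) / (2 * b)); rewrite mul0r sub0r.
rewrite mulrCA divff ?mulr1 ?mulf_neq0 ?gt_eqF //; lra.
Qed.

Lemma invSn_lt (e : R) : 0 < e -> exists N, forall n, (N <= n)%N -> n.+1%:R^-1 < e.
Proof.
move=> e_gt0; exists (Num.Def.archi_bound e^-1) => n le_Nn.
rewrite -[e]invrK ltf_pV2 ?posrE ?invr_gt0 ?ltr0Sn //.
have einv_ge0 : 0 <= e^-1 by rewrite invr_ge0 ltW.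
apply: lt_le_trans (archi_boundP einv_ge0) _.
by rewrite ler_nat; apply: leq_trans le_Nn _.
Qed.
End RealFacts.

Section PositiveForm.
Variable R : realType.
Local Notation C := R[i].
Variables (L : Type) (add : L -> L -> L) (scl : C -> L -> L) (q : L -> L -> C).
Hypothesis qDl : forall s t u, q (add s t) u = q s u + q t u.
Hypothesis qDr : forall s t u, q s (add t u) = q s t + q s u.
Hypothesis qZl : forall c s t, q (scl c s) t = c^* * q s t.
Hypothesis qZr : forall c s t, q s (scl c t) = c * q s t.
Hypothesis q_ge0 : forall s, 0 <= q s s.

Let q_real s : Im (q s s) = 0.
Proof. exact: ger0_Im. Qed.
Let Re_q_ge0 s : 0 <= Re (q s s).
Proof. exact: ler_Re (q_ge0 s). Qed.

(* polarization: q (s + t) (s + t) and q (s + i t) (s + i t) are real *)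
Lemma form_herm s t : q t s = (q s t)^*.
Proof.
have real_sum := q_real (add s t).
have real_isum := q_real (add s (scl 'i%C t)).
rewrite !qDl !qDr !ImD !q_real in real_sum.
rewrite !qDl !qDr !qZl !qZr !ImD !ImM !ReM !q_real /= in real_isum.
by apply: complexRI; rewrite ?ReJ ?ImJ; lra.
Qed.

Lemma Re_form_shift s t c :
  Re (q (add s (scl c t)) (add s (scl c t))) =
  Re (q s s) + 2 * Re (c * q s t) + normc c ^+ 2 * Re (q t t).
Proof.
rewrite !qDl !qDr !qZl !qZr (form_herm t s) !ReD !ReM !ImM ReJ ImJ !ReJ !ImJ.
by rewrite q_real normcE2; ring.
Qed.

Lemma form_CS s t : normc (q s t) ^+ 2 <= Re (q s s) * Re (q t t).
Proof.
set w := q s t; have [w0|w_neq0] := eqVneq (normc w) 0.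
  by rewrite w0 expr0n mulr_ge0.
have quad r : 0 <= (normc w ^+ 2 * Re (q t t)) * r ^+ 2 - 2 * normc w ^+ 2 * r + Re (q s s).
  have := Re_q_ge0 (add s (scl (- r%:C%C * w^*) t)).
  rewrite Re_form_shift -/w -(mulrA _ w^*) mulJc mulNr ReN ReMr /=.
  rewrite normcM normcN normc_real normc_conj exprMn real_normK ?num_real //; lra.
have w2_gt0 : 0 < normc w ^+ 2 by rewrite exprn_gt0 // lt_def w_neq0 normc_ge0.
have := discriminant_le (mulr_ge0 (ltW w2_gt0) (Re_q_ge0 t)) (ltW w2_gt0) quad.
by nra.
Qed.
End PositiveForm.

Section LinearOp.
Variable R : realType.
Variables (H : lmodType R[i]) (f : H -> H).
Hypothesis f_lin : linear_op f.

Lemma linear_opD x y : f (x + y) = f x + f y.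
Proof. by have := f_lin 1 x y; rewrite !scale1r. Qed.
Lemma linear_op0 : f 0 = 0.
Proof. by apply: (addrI (f 0)); rewrite -linear_opD !addr0. Qed.
Lemma linear_opZ a x : f (a *: x) = a *: f x.
Proof. by have := f_lin a x 0; rewrite !addr0 linear_op0 addr0. Qed.
Lemma linear_opB x y : f (x - y) = f x - f y.
Proof. by rewrite linear_opD -scaleN1r linear_opZ scaleN1r. Qed.
Lemma linear_op_sum (I : Type) (r : seq I) (F : I -> H) :
  f (\sum_(i <- r) F i) = \sum_(i <- r) f (F i).
Proof. by elim: r => [|i r IH]; rewrite ?big_nil ?linear_op0 // !big_cons linear_opD IH. Qed.
End LinearOp.

Section SkewForm.
Variables (R : realType) (d : nat) (S : 'M[R]_d).

Lemma sform_skew xi : S^T = - S -> sform S xi xi = 0.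
Proof.
move=> S_skew; rewrite /sform; set M := xi *m S *m xi^T.
have /(congr1 (fun M : 'M[R]_1 => M 0 0)) : M^T = - M.
  by rewrite !trmx_mul trmxK S_skew mulNmx mulmxN mulmxA.
by rewrite !mxE => M00; lra.
Qed.

Lemma sform0l eta : sform S 0 eta = 0.
Proof. by rewrite /sform !mul0mx mxE. Qed.

Lemma sformNl xi eta : sform S (- xi) eta = - sform S xi eta.
Proof. by rewrite /sform !mulNmx mxE. Qed.
End SkewForm.

Lemma expi0 (R : realType) : expi 0 = 1 :> R[i].
Proof. by rewrite /expi cos0 sin0. Qed.

Section InnerProductSpace.
Variable R : realType.
Local Notation C := R[i].
Variables (H : lmodType C) (ip : H -> H -> C).
Hypothesis ipl : forall x y z (a : C), ip x (a *: y + z) = a * ip x y + ip x z.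
Hypothesis ipc : forall x y, ip y x = (ip x y)^*.
Hypothesis ip_ge0 : forall x, 0 <= ip x x.
Hypothesis ip_eq0 : forall x, ip x x = 0 -> x = 0.
Local Notation nrm := (hnorm ip).

Lemma ipDr x y z : ip x (y + z) = ip x y + ip x z.
Proof. by have := ipl x y z 1; rewrite scale1r mul1r. Qed.
Lemma ip0r x : ip x 0 = 0.
Proof. by apply: (addrI (ip x 0)); rewrite -ipDr !addr0. Qed.
Lemma ipZr x y a : ip x (a *: y) = a * ip x y.
Proof. by have := ipl x y 0 a; rewrite !addr0 ip0r addr0. Qed.
Lemma ipNr x y : ip x (- y) = - ip x y.
Proof. by rewrite -scaleN1r ipZr mulN1r. Qed.
Lemma ipBr x y z : ip x (y - z) = ip x y - ip x z.
Proof. by rewrite ipDr ipNr. Qed.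
Lemma ip_sumr (I : Type) (r : seq I) (F : I -> H) x :
  ip x (\sum_(i <- r) F i) = \sum_(i <- r) ip x (F i).
Proof. by elim: r => [|i r IH]; rewrite ?big_nil ?ip0r // !big_cons ipDr IH. Qed.

Lemma ipDl x y z : ip (x + y) z = ip x z + ip y z.
Proof. by rewrite ipc ipDr rmorphD (ipc z x) (ipc z y). Qed.
Lemma ip0l x : ip 0 x = 0.
Proof. by rewrite ipc ip0r rmorph0. Qed.
Lemma ipZl x y a : ip (a *: x) y = a^* * ip x y.
Proof. by rewrite ipc ipZr rmorphM (ipc y x). Qed.
Lemma ipBl x y z : ip (x - y) z = ip x z - ip y z.
Proof. by rewrite ipc ipBr rmorphB (ipc z x) (ipc z y). Qed.
Lemma ip_suml (I : Type) (r : seq I) (F : I -> H) x :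
  ip (\sum_(i <- r) F i) x = \sum_(i <- r) ip (F i) x.
Proof. by elim: r => [|i r IH]; rewrite ?big_nil ?ip0l // !big_cons ipDl IH. Qed.

Lemma hnorm_ge0 x : 0 <= nrm x. Proof. exact: sqrtr_ge0. Qed.
Lemma sqr_hnorm x : nrm x ^+ 2 = Re (ip x x).
Proof. by rewrite sqr_sqrtr //; apply: ler_Re (ip_ge0 x). Qed.
Lemma ip_hnorm x : ip x x = (nrm x ^+ 2)%:C%C.
Proof. by apply: complexRI; rewrite ?sqr_hnorm //= ger0_Im. Qed.
Lemma hnorm0 : nrm 0 = 0.
Proof. by rewrite /hnorm ip0r sqrtr0. Qed.
Lemma hnorm_eq0 x : nrm x = 0 -> x = 0.
Proof. by move=> x0; apply: ip_eq0; rewrite ip_hnorm x0 expr0n. Qed.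

Lemma normc_ip_le x y : normc (ip x y) <= nrm x * nrm y.
Proof.
have := form_CS ipDl ipDr (fun c x y => ipZl x y c) (fun c x y => ipZr x y c) ip_ge0 x y.
rewrite -!sqr_hnorm -exprMn; apply: ler_of_sqr.
by rewrite mulr_ge0 ?hnorm_ge0.
Qed.

Lemma sqr_hnormD x y : nrm (x + y) ^+ 2 = nrm x ^+ 2 + 2 * Re (ip x y) + nrm y ^+ 2.
Proof. by rewrite !sqr_hnorm ipDl !ipDr !ReD (ipc x y) ReJ; ring. Qed.
Lemma hnormZ a x : nrm (a *: x) = normc a * nrm x.
Proof.
rewrite {1}/hnorm ipZl ipZr mulrA mulJc ReMr -sqr_hnorm -exprMn sqrtr_sqr.
by rewrite ger0_norm // mulr_ge0 ?normc_ge0 ?hnorm_ge0.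
Qed.
Lemma hnormN x : nrm (- x) = nrm x.
Proof. by rewrite -scaleN1r hnormZ normcN normc1 mul1r. Qed.
Lemma hnorm_distC x y : nrm (x - y) = nrm (y - x).
Proof. by rewrite -hnormN opprB. Qed.
Lemma hnormD x y : nrm (x + y) <= nrm x + nrm y.
Proof.
apply: ler_of_sqr; first by rewrite addr_ge0 ?hnorm_ge0.
by rewrite sqr_hnormD; have := ler_Re_normc (ip x y); have := normc_ip_le x y; nra.
Qed.
Lemma hnorm_le_distD x y : nrm x <= nrm y + nrm (x - y).
Proof. by have := hnormD y (x - y); rewrite addrC subrK addrC. Qed.

Lemma normc_ip_op_sub_le T M : linear_op T -> (forall z, nrm (T z) <= M * nrm z) ->
  forall x v, normc (ip x (T x) - ip v (T v)) <= `|M| * nrm (x - v) * (2 * nrm x + nrm (x - v)).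
Proof.
move=> T_lin T_le x v.
have T_le' z : nrm (T z) <= `|M| * nrm z.
  by apply: le_trans (T_le z) _; apply: ler_wpM2r; [apply: hnorm_ge0 | apply: ler_norm].
have -> : ip x (T x) - ip v (T v) = ip (x - v) (T x) + ip v (T (x - v)).
  by rewrite (linear_opB T_lin) ipBl ipBr addrA subrK.
apply: le_trans (le_normcD _ _) _.
have := normc_ip_le (x - v) (T x); have := normc_ip_le v (T (x - v)).
have := T_le' x; have := T_le' (x - v); have := hnorm_le_distD v x.
rewrite (hnorm_distC v x); have := hnorm_ge0 v; have := hnorm_ge0 (x - v).
have := normr_ge0 M.
move: (nrm x) (nrm (x - v)) (nrm v) (nrm (T x)) (nrm (T (x - v))) `|M|.
move=> nx dl nv ntx ntd K K_ge0 dl_ge0 nv_ge0 nv_le ntd_le ntx_le ip2 ip1.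
have : dl * ntx <= dl * (K * nx) by rewrite ler_wpM2l.
have : nv * ntd <= nv * (K * dl) by rewrite ler_wpM2l.
have : nv * (K * dl) <= (nx + dl) * (K * dl) by rewrite ler_wpM2r ?mulr_ge0.
lra.
Qed.

Section ClosedSpan.
Variables (L : Type) (vec : L -> H).

Definition in_cspan z := forall e, 0 < e -> exists s, nrm (z - vec s) < e.

Lemma cspan_vec s : in_cspan (vec s).
Proof. by move=> e e_gt0; exists s; rewrite subrr hnorm0. Qed.

Lemma cspan_closed z :
  (forall e, 0 < e -> exists2 z', in_cspan z' & nrm (z - z') < e) -> in_cspan z.
Proof.
move=> approx e e_gt0; have e2_gt0 : 0 < e / 2 by rewrite divr_gt0.
have [z' /(_ _ e2_gt0)[s z's] zz'] := approx _ e2_gt0.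
exists s; have := hnormD (z - z') (z' - vec s); rewrite addrA subrK; lra.
Qed.

Lemma cspan_perp k z : in_cspan k -> (forall s, ip (vec s) z = 0) -> ip k z = 0.
Proof.
move=> kK z_perp; apply: eq0_normc; apply/eqP; rewrite eq_le normc_ge0 andbT.
apply: (@ler_addgt0_mulP _ _ 0 (nrm z)) => e /kK[s ks]; rewrite add0r.
rewrite -[k](subrK (vec s)) ipDl z_perp addr0.
apply: le_trans (normc_ip_le _ _) _.
by apply: ler_wpM2r; [apply: hnorm_ge0 | apply: ltW].
Qed.

Lemma cspan_perp0 z : in_cspan z -> (forall s, ip (vec s) z = 0) -> z = 0.
Proof. by move=> zK z_perp; apply: ip_eq0; apply: cspan_perp. Qed.

Lemma cspan_hnorm_le z K : 0 <= K -> in_cspan z ->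
  (forall s, normc (ip (vec s) z) <= K * nrm (vec s)) -> nrm z <= K.
Proof.
move=> K_ge0 zK z_bounded; have z_ge0 := hnorm_ge0 z.
suff : nrm z ^+ 2 <= K * nrm z by nra.
apply: (@ler_addgt0_mulP _ _ _ (nrm z + K)) => e /zK[s zs].
have -> : nrm z ^+ 2 = Re (ip (z - vec s) z) + Re (ip (vec s) z).
  by rewrite -ReD -ipDl subrK sqr_hnorm.
have le1 : Re (ip (z - vec s) z) <= e * nrm z.
  apply: le_trans (ler_Re_normc _) _; apply: le_trans (normc_ip_le _ _) _.
  by apply: ler_wpM2r => //; apply: ltW.
have le2 : Re (ip (vec s) z) <= K * nrm (vec s).
  exact: le_trans (ler_Re_normc _) (z_bounded s).
have le3 : nrm (vec s) <= nrm z + e.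
  by have := hnorm_le_distD (vec s) z; rewrite hnorm_distC; lra.
nra.
Qed.
End ClosedSpan.

Hypothesis ip_complete : forall u : nat -> H,
  (forall e : R, 0 < e -> exists N, forall m n, (N <= m)%N -> (N <= n)%N ->
     nrm (u m - u n) < e) ->
  exists l : H, forall e : R, 0 < e -> exists N, forall n, (N <= n)%N ->
     nrm (u n - l) < e.

Section Riesz.
Variables (L : Type) (s0 : L) (vec : L -> H) (add : L -> L -> L) (scl : C -> L -> L).
Variables (l : L -> C) (K : R).
Hypothesis vecD : forall s t, vec (add s t) = vec s + vec t.
Hypothesis vecZ : forall c s, vec (scl c s) = c *: vec s.
Hypothesis lD : forall s t, l (add s t) = l s + l t.
Hypothesis lZ : forall c s, l (scl c s) = c^* * l s.
Hypothesis K_ge0 : 0 <= K.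
Hypothesis l_bounded : forall s, normc (l s) <= K * nrm (vec s).

(* Dirichlet's principle: the representing vector minimizes J over the span *)
Let J s := nrm (vec s) ^+ 2 - 2 * Re (l s).

Let J_ge s : - K ^+ 2 <= J s.
Proof.
have := l_bounded s; have := ler_Re_normc (l s); have := sqr_ge0 (nrm (vec s) - K).
by rewrite /J; nra.
Qed.

Let J_parallelogram s t :
  J s + J t = 2 * J (scl (2^-1 : R)%:C%C (add s t)) + 2^-1 * nrm (vec s - vec t) ^+ 2.
Proof.
rewrite /J vecZ vecD hnormZ lZ lD conjC_real ReMr ReD normc_real exprMn.
rewrite (sqr_hnormD (vec s) (vec t)) (sqr_hnormD (vec s) (- vec t)) hnormN ipNr ReN.
by rewrite ger0_norm ?invr_ge0 ?ler0n // expr2; field.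
Qed.

Let J_shift s t c : J (add s (scl c t)) =
  J s + 2 * Re (c * (ip (vec s) (vec t) - (l t)^*)) + normc c ^+ 2 * nrm (vec t) ^+ 2.
Proof.
rewrite /J vecD vecZ lD lZ sqr_hnormD hnormZ ipZr exprMn ReD ReMJ mulrBr ReB.
by ring.
Qed.

Let Jinf := inf (range J).

Let J_has_inf : has_inf (range J).
Proof. by split; [exists (J s0), s0 | exists (- K ^+ 2) => _ [t _ <-]; apply: J_ge]. Qed.

Let Jinf_le s : Jinf <= J s.
Proof. by apply: ge_inf; [case: J_has_inf | exists s]. Qed.

Let J_near_inf n : exists s, J s < Jinf + n.+1%:R^-1.
Proof.
have inv_gt0 : 0 < n.+1%:R^-1 :> R by rewrite invr_gt0.
by have [_ [s _ <-] ?] := inf_adherent inv_gt0 J_has_inf; exists s.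
Qed.

Let J_almost_min_close s t a b : J s <= Jinf + a -> J t <= Jinf + b ->
  nrm (vec s - vec t) ^+ 2 <= 2 * a + 2 * b.
Proof.
have := J_parallelogram s t; have := Jinf_le (scl (2^-1 : R)%:C%C (add s t)); lra.
Qed.

(* perturbing an almost minimizer s in the direction t, with the optimal step *)
Let J_almost_min_repr s t a : J s <= Jinf + a ->
  normc (ip (vec s) (vec t) - (l t)^*) ^+ 2 <= a * (nrm (vec t) ^+ 2 + 1).
Proof.
move=> Js_small; set g := _ - _; set U := nrm (vec t) ^+ 2; set G := normc g ^+ 2.
have U_ge0 : 0 <= U := sqr_ge0 _.
have G_ge0 : 0 <= G := sqr_ge0 _.
set r := (U + 1)^-1; have r_gt0 : 0 < r by rewrite invr_gt0; lra.
have rU1 : r * (U + 1) = 1 by rewrite mulVf // gt_eqF //; lra.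
have := Jinf_le (add s (scl (- r%:C%C * g^*) t)).
rewrite J_shift -/g -(mulrA _ g^*) mulJc mulNr ReN ReMr /=.
rewrite normcM normcN normc_real normc_conj exprMn (ger0_norm (ltW r_gt0)) -/G -/U => J_ge_inf.
have rU : r * U = 1 - r by lra.
have step_gain : r ^+ 2 * G * U = r * G * (r * U) by ring.
rewrite rU in step_gain.
have r2G_ge0 : 0 <= r ^+ 2 * G by rewrite mulr_ge0 ?sqr_ge0.
have rG : r * G <= a by lra.
have -> : G = r * G * (U + 1) by rewrite mulrAC rU1 mul1r.
by apply: ler_wpM2r => //; lra.
Qed.

Let J_min_seq_cauchy (u : nat -> L) : (forall n, J (u n) <= Jinf + n.+1%:R^-1) ->
  forall e, 0 < e -> exists N, forall m n, (N <= m)%N -> (N <= n)%N ->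
    nrm (vec (u m) - vec (u n)) < e.
Proof.
move=> uP e e_gt0; have e2_gt0 : 0 < e ^+ 2 / 4 by rewrite divr_gt0 ?exprn_gt0.
have [N invN] := invSn_lt e2_gt0; exists N => m n le_Nm le_Nn.
have := J_almost_min_close (uP m) (uP n).
have := invN m le_Nm; have := invN n le_Nn; have := hnorm_ge0 (vec (u m) - vec (u n)).
move: (nrm _) (m.+1%:R^-1 : R) (n.+1%:R^-1 : R) => X a b X_ge0 b_small a_small close.
by rewrite -ltr_sqr ?nnegrE ?(ltW e_gt0) //; lra.
Qed.

Let J_min_seq_repr (u : nat -> L) y : (forall n, J (u n) <= Jinf + n.+1%:R^-1) ->
  (forall e, 0 < e -> exists N, forall n, (N <= n)%N -> nrm (vec (u n) - y) < e) ->
  forall t, ip (vec t) y = l t.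
Proof.
move=> uP u_cvg t; set g := ip y (vec t) - (l t)^*.
suff : g = 0 by rewrite ipc => /eqP; rewrite subr_eq0 => /eqP ->; apply: conjCK.
apply: eq0_normc; apply/eqP; rewrite eq_le normc_ge0 andbT.
apply: (@ler_addgt0_mulP _ _ 0 (2 * nrm (vec t) + 1)) => e e_gt0; rewrite add0r.
have [N1 uN1] := u_cvg e e_gt0.
have [N2 invN2] := invSn_lt (exprn_gt0 2 e_gt0).
pose n := maxn N1 N2.
have gn_small : normc (ip (vec (u n)) (vec t) - (l t)^*) <= e * (nrm (vec t) + 1).
  apply: ler_of_sqr; first by rewrite mulr_ge0 ?addr_ge0 ?hnorm_ge0 ?(ltW e_gt0).
  apply: le_trans (J_almost_min_repr t (uP n)) _.
  have := invN2 n (leq_maxr _ _); have := hnorm_ge0 (vec t).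
  have : 0 <= n.+1%:R^-1 :> R by rewrite invr_ge0.
  by set X := nrm _; set v := _^-1; nra.
have -> : g = ip (y - vec (u n)) (vec t) + (ip (vec (u n)) (vec t) - (l t)^*).
  by rewrite /g ipBl addrA subrK.
apply: le_trans (le_normcD _ _) _.
have : normc (ip (y - vec (u n)) (vec t)) <= e * nrm (vec t).
  apply: le_trans (normc_ip_le _ _) _; apply: ler_wpM2r; first exact: hnorm_ge0.
  by apply: ltW; rewrite hnorm_distC; apply: uN1; apply: leq_maxl.
lra.
Qed.

Theorem riesz_span :
  exists y, [/\ in_cspan vec y, forall s, ip (vec s) y = l s & nrm y <= K].
Proof.
pose u n := sval (cid (J_near_inf n)).
have uP n : J (u n) <= Jinf + n.+1%:R^-1 by apply/ltW/(svalP (cid (J_near_inf n))).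
have [y u_cvg] := ip_complete (J_min_seq_cauchy uP).
have y_cspan : in_cspan vec y.
  by move=> e /u_cvg[N uN]; exists (u N); rewrite hnorm_distC uN.
have y_repr := J_min_seq_repr uP u_cvg.
by exists y; split=> //; apply: (cspan_hnorm_le K_ge0 y_cspan) => s; rewrite y_repr.
Qed.
End Riesz.

Section WeylSpan.
Variables (d : nat) (S : 'M[R]_d) (W : 'rV[R]_d -> H -> H) (psi : H).
Variable D : 'rV[R]_d -> Prop.
Hypothesis S_skew : S^T = - S.
Hypothesis W_lin : forall xi, linear_op (W xi).
Hypothesis W_ip : forall xi x y, ip (W xi x) (W xi y) = ip x y.
Hypothesis W_surj : forall xi y, exists x, W xi x = y.
Hypothesis W_mul : forall xi eta x,
  W xi (W eta x) = expi (sform S xi eta) *: W (xi + eta) x.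
Hypothesis W_cont : forall x xi0 (e : R), 0 < e -> exists2 delta : R, 0 < delta &
  forall xi, rv_close xi xi0 delta -> nrm (W xi x - W xi0 x) < e.
Hypothesis psi_unit : nrm psi = 1.
Hypothesis psi_cyclic : cyclic_vec ip W psi.
Hypothesis D_dense : dense_rv D.

Lemma hnormW xi x : nrm (W xi x) = nrm x.
Proof. by rewrite /hnorm W_ip. Qed.

Lemma W0 x : W 0 x = x.
Proof. by have [y <-] := W_surj 0 x; rewrite W_mul sform0l expi0 scale1r addr0. Qed.

Lemma WNK xi x : W (- xi) (W xi x) = x.
Proof. by rewrite W_mul sformNl sform_skew // oppr0 expi0 scale1r addNr W0. Qed.

Lemma W_adj xi x y : ip x (W xi y) = ip (W (- xi) x) y.
Proof. by rewrite -(W_ip (- xi)) WNK. Qed.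

Definition Dpoint := {xi : 'rV[R]_d | D xi}.
Definition wcomb := seq (C * Dpoint).
Definition wsum (s : wcomb) : H := \sum_(p <- s) p.1 *: W (sval p.2) psi.
Definition wscale (c : C) (s : wcomb) : wcomb := [seq (c * p.1, p.2) | p <- s].

Lemma wsum_nil : wsum [::] = 0.
Proof. by rewrite /wsum big_nil. Qed.
Lemma wsum_cat s t : wsum (s ++ t) = wsum s + wsum t.
Proof. by rewrite /wsum big_cat. Qed.
Lemma wsum_scale c s : wsum (wscale c s) = c *: wsum s.
Proof.
by rewrite /wsum big_map scaler_sumr; apply: eq_bigr => p _; rewrite scalerA.
Qed.
Lemma wsum1 xi (Dxi : D xi) : wsum [:: (1, exist _ xi Dxi)] = W xi psi.
Proof. by rewrite /wsum big_seq1 scale1r. Qed.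

Local Notation in_K := (in_cspan wsum).

Lemma cspan0 : in_K 0.
Proof. by rewrite -wsum_nil; apply: cspan_vec. Qed.

Lemma cspan_lin a x y : in_K x -> in_K y -> in_K (a *: x + y).
Proof.
move=> xK yK e e_gt0; set c := 2 * (normc a + 1).
have c_gt0 : 0 < c by rewrite mulr_gt0 // ltr_wpDl ?normc_ge0.
have [s xs] := xK _ (divr_gt0 e_gt0 c_gt0).
have [t yt] := yK _ (divr_gt0 e_gt0 (ltr0Sn R 1)).
exists (wscale a s ++ t); rewrite wsum_cat wsum_scale.
have -> : a *: x + y - (a *: wsum s + wsum t) = a *: (x - wsum s) + (y - wsum t).
  by rewrite scalerBr opprD addrACA.
apply: le_lt_trans (hnormD _ _) _; rewrite hnormZ.
have : normc a * nrm (x - wsum s) <= normc a * (e / c).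
  by apply: ler_wpM2l; [apply: normc_ge0 | apply: ltW].
have : normc a * (e / c) <= e / 2.
  rewrite mulrA ler_pdivrMr // (_ : e / 2 * c = e * (normc a + 1)); first lra.
  by rewrite /c mulrA divfK // pnatr_eq0.
lra.
Qed.

Lemma cspanB x y : in_K x -> in_K y -> in_K (x - y).
Proof. by move=> xK yK; rewrite addrC -scaleN1r; apply: cspan_lin. Qed.

Lemma cspan_Wpsi zeta : in_K (W zeta psi).
Proof.
move=> e /(W_cont psi zeta)[delta delta_gt0 W_close].
have [eta [Deta eta_close]] := D_dense zeta delta_gt0.
exists [:: (1, exist _ eta Deta)]; rewrite wsum1 hnorm_distC; apply: W_close.
by move=> k; rewrite distrC; apply: eta_close.
Qed.

Lemma cspan_W_wsum xi s : in_K (W xi (wsum s)).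
Proof.
elim: s => [|p s IH]; first by rewrite wsum_nil (linear_op0 (W_lin xi)); apply: cspan0.
rewrite /wsum big_cons -/(wsum s) (linear_opD (W_lin xi)) (linear_opZ (W_lin xi)).
by rewrite W_mul scalerA; apply: cspan_lin => //; apply: cspan_Wpsi.
Qed.

Lemma cspan_W xi z : in_K z -> in_K (W xi z).
Proof.
move=> zK; apply: cspan_closed => e /zK[s zs].
exists (W xi (wsum s)); first exact: cspan_W_wsum.
by rewrite -(linear_opB (W_lin xi)) hnormW.
Qed.

Lemma proj_ex x :
  exists y, [/\ in_K y, forall s, ip (wsum s) y = ip (wsum s) x & nrm y <= nrm x].
Proof.
apply: (riesz_span [::] wsum_cat wsum_scale _ _ (hnorm_ge0 x)) => [s t|c s|s].
- by rewrite wsum_cat ipDl.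
- by rewrite wsum_scale ipZl.
- by rewrite mulrC; apply: normc_ip_le.
Qed.

Definition proj x := sval (cid (proj_ex x)).

Lemma projP x : [/\ in_K (proj x), forall s, ip (wsum s) (proj x) = ip (wsum s) x &
  nrm (proj x) <= nrm x].
Proof. exact: svalP (cid (proj_ex x)). Qed.

Lemma proj_uniq x y : in_K y -> (forall s, ip (wsum s) y = ip (wsum s) x) -> proj x = y.
Proof.
move=> yK y_repr; have [pK p_repr _] := projP x.
apply/eqP; rewrite -subr_eq0; apply/eqP; apply: cspan_perp0; first exact: cspanB.
by move=> s; rewrite ipBr p_repr y_repr subrr.
Qed.

Lemma proj_lin : linear_op proj.
Proof.
move=> a x y; apply: proj_uniq => [|s].
  by apply: cspan_lin; [case: (projP x) | case: (projP y)].
by rewrite !ipl; case: (projP x) => _ -> _; case: (projP y) => _ -> _.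
Qed.

Lemma proj_W xi x : proj (W xi x) = W xi (proj x).
Proof.
apply: proj_uniq => [|s]; first by apply: cspan_W; case: (projP x).
rewrite !W_adj; apply/eqP; rewrite -subr_eq0 -ipBr; apply/eqP.
apply: cspan_perp; first exact: cspan_W_wsum.
by move=> t; case: (projP x) => _ p_repr _; rewrite ipBr p_repr subrr.
Qed.

(* the projection onto the closed span commutes with CCR(S), hence with T *)
Lemma cspan_full x : in_K x.
Proof.
apply: cspan_closed => e e_gt0.
have [T [[_ T_comm] Tpsi]] := psi_cyclic x e_gt0.
exists (T psi); last by rewrite hnorm_distC.
have proj_bounded : bounded_op ip proj.
  by split; [apply: proj_lin | exists 1 => z; rewrite mul1r; case: (projP z)].
have psiK : in_K psi by rewrite -(W0 psi); apply: cspan_Wpsi.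
have <- : proj psi = psi by apply: proj_uniq.
by rewrite (T_comm proj proj_bounded proj_W); case: (projP (T psi)).
Qed.

Lemma wsum_ip_inj y z : (forall s, ip (wsum s) y = ip (wsum s) z) -> y = z.
Proof.
move=> yz; apply/eqP; rewrite -subr_eq0; apply/eqP.
by apply: (cspan_perp0 (cspan_full _)) => s; rewrite ipBr yz subrr.
Qed.

Lemma bounded_op_eq f g : bounded_op ip f -> bounded_op ip g ->
  (forall t, f (wsum t) = g (wsum t)) -> f = g.
Proof.
move=> [f_lin [Mf f_le]] [g_lin [Mg g_le]] fg; apply: funext => x.
apply/eqP; rewrite -subr_eq0; apply/eqP; apply: hnorm_eq0.
apply/eqP; rewrite eq_le hnorm_ge0 andbT.
apply: (@ler_addgt0_mulP _ _ 0 (`|Mf| + `|Mg|)) => e /(cspan_full x)[t xt].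
have -> : f x - g x = f (x - wsum t) - g (x - wsum t).
  by rewrite (linear_opB f_lin) (linear_opB g_lin) fg opprB addrA subrK.
have le_norm_e M : M * nrm (x - wsum t) <= `|M| * e.
  apply: le_trans (ler_wpM2r (hnorm_ge0 _) (ler_norm M)) _.
  by apply: ler_wpM2l; [apply: normr_ge0 | apply: ltW].
have := hnormD (f (x - wsum t)) (- g (x - wsum t)); rewrite hnormN.
have := f_le (x - wsum t); have := g_le (x - wsum t).
have := le_norm_e Mf; have := le_norm_e Mg; lra.
Qed.

(* ip x (T x) depends continuously on x and is nonnegative on the dense span *)
Lemma ip_op_ge0 T M : linear_op T -> (forall z, nrm (T z) <= M * nrm z) ->
  (forall s, 0 <= ip (wsum s) (T (wsum s))) -> forall x, 0 <= ip x (T x).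
Proof.
move=> T_lin T_le T_span x; apply: ge0_complex_closed => e e_gt0.
set c := `|M| * (2 * nrm x + 1) + 1.
have c_gt0 : 0 < c by rewrite ltr_wpDl ?mulr_ge0 ?addr_ge0 ?mulr_ge0 ?hnorm_ge0.
have eta_gt0 : 0 < Num.min 1 (e / c) by rewrite lt_min ltr01 divr_gt0.
have [s xs] := cspan_full x eta_gt0.
exists (ip (wsum s) (T (wsum s))); first exact: T_span.
move: xs; rewrite lt_min ltr_pdivlMr // /c => /andP[dl1 dlc].
apply: le_lt_trans (normc_ip_op_sub_le T_lin T_le x (wsum s)) _.
have := hnorm_ge0 (x - wsum s); have := normr_ge0 M.
move: dl1 dlc; move: (nrm (x - wsum s)) `|M| => dl K dl1 dlc K_ge0 dl_ge0.
have : K * dl * (2 * nrm x + dl) <= K * dl * (2 * nrm x + 1).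
  by rewrite ler_wpM2l ?mulr_ge0 // lerD2l ltW.
lra.
Qed.

Lemma phiA_continuous T : linear_op T -> (forall x, nrm (T x) <= nrm x) ->
  forall xi0 eta0 (e : R), 0 < e -> exists2 delta : R, 0 < delta &
    forall xi eta, rv_close xi xi0 delta -> rv_close eta eta0 delta ->
      `|phiA ip W psi T xi eta - phiA ip W psi T xi0 eta0| < e%:C%C.
Proof.
move=> T_lin T_le xi0 eta0 e e_gt0; have e2_gt0 : 0 < e / 2 by rewrite divr_gt0.
have [d1 d1_gt0 W_close1] := W_cont psi xi0 e2_gt0.
have [d2 d2_gt0 W_close2] := W_cont psi eta0 e2_gt0.
exists (Num.min d1 d2) => [|xi eta xi_close eta_close]; first by rewrite lt_min d1_gt0.
have close1 : nrm (W xi psi - W xi0 psi) < e / 2.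
  by apply: W_close1 => k; have := xi_close k; rewrite lt_min => /andP[].
have close2 : nrm (W eta psi - W eta0 psi) < e / 2.
  by apply: W_close2 => k; have := eta_close k; rewrite lt_min => /andP[].
rewrite normr_normc ltcR /phiA.
have -> : ip (W xi psi) (T (W eta psi)) - ip (W xi0 psi) (T (W eta0 psi)) =
    ip (W xi psi - W xi0 psi) (T (W eta psi)) +
    ip (W xi0 psi) (T (W eta psi - W eta0 psi)).
  by rewrite (linear_opB T_lin) ipBl ipBr addrA subrK.
apply: le_lt_trans (le_normcD _ _) _.
have := normc_ip_le (W xi psi - W xi0 psi) (T (W eta psi)).
have := normc_ip_le (W xi0 psi) (T (W eta psi - W eta0 psi)).
have := T_le (W eta psi); have := T_le (W eta psi - W eta0 psi).
rewrite !hnormW psi_unit; have := hnorm_ge0 (W xi psi - W xi0 psi); nra.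
Qed.

Definition kform (k : 'rV[R]_d -> 'rV[R]_d -> C) (s t : wcomb) : C :=
  \sum_(p <- s) \sum_(q <- t) p.1^* * q.1 * k (sval p.2) (sval q.2).

Lemma kformDl k s t u : kform k (s ++ t) u = kform k s u + kform k t u.
Proof. by rewrite /kform big_cat. Qed.
Lemma kformDr k s t u : kform k s (t ++ u) = kform k s t + kform k s u.
Proof. by rewrite /kform -big_split; apply: eq_bigr => p _; rewrite big_cat. Qed.
Lemma kformZl k c s t : kform k (wscale c s) t = c^* * kform k s t.
Proof.
rewrite /kform big_map mulr_sumr; apply: eq_bigr => p _.
by rewrite mulr_sumr; apply: eq_bigr => q _ /=; rewrite rmorphM -!mulrA.
Qed.
Lemma kformZr k c s t : kform k s (wscale c t) = c * kform k s t.
Proof.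
rewrite /kform mulr_sumr; apply: eq_bigr => p _.
by rewrite big_map mulr_sumr; apply: eq_bigr => q _ /=; rewrite mulrCA !mulrA.
Qed.
Lemma kformB k1 k2 s t :
  kform (fun a b => k1 a b - k2 a b) s t = kform k1 s t - kform k2 s t.
Proof.
rewrite /kform -sumrB; apply: eq_bigr => p _.
by rewrite -sumrB; apply: eq_bigr => q _; rewrite mulrBr.
Qed.

Lemma kform_ge0 k s : psd_kernel D k -> 0 <= kform k s s.
Proof.
case: s => [|p0 s'] k_psd; first by rewrite /kform big_nil.
set s := p0 :: s'; pose xs (i : 'I_(size s)) := sval (nth p0 s i).2.
pose c := \col_(i < size s) (nth p0 s i).1.
have := k_psd _ xs (fun i => svalP (nth p0 s i).2) c.
suff -> : ((map_mx Num.conj c)^T *m (\matrix_(i, j) k (xs i) (xs j)) *m c) 0 0 =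
    kform k s s by [].
rewrite /kform (big_nth p0) big_mkord mxE; apply: esym.
under eq_bigr => i _ do rewrite (big_nth p0) big_mkord.
under [RHS]eq_bigr => j _ do rewrite mxE big_distrl /=.
rewrite exchange_big; apply: eq_bigr => i _; apply: eq_bigr => j _.
by rewrite !mxE /xs /= mulrAC.
Qed.

Lemma ip_wsum_op k f : linear_op f ->
  (forall xi eta, D xi -> D eta -> k xi eta = ip (W xi psi) (f (W eta psi))) ->
  forall s t, ip (wsum s) (f (wsum t)) = kform k s t.
Proof.
move=> f_lin f_k s t; rewrite /wsum (linear_op_sum f_lin) ip_suml /kform.
apply: eq_bigr => p _; rewrite ip_sumr; apply: eq_bigr => q _.
by rewrite (linear_opZ f_lin) ipZl ipZr mulrA f_k //; [apply: svalP | apply: svalP].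
Qed.

Section Kernel.
Variable phi : 'rV[R]_d -> 'rV[R]_d -> C.
Hypothesis phi_psd : psd_kernel D phi.
Hypothesis gram_sub_phi_psd :
  psd_kernel D (fun xi eta => phiA ip W psi id xi eta - phi xi eta).
Local Notation Q := (kform phi).

Lemma Q_le_gram s : Q s s <= ip (wsum s) (wsum s).
Proof.
have gram : ip (wsum s) (wsum s) = kform (phiA ip W psi id) s s.
  by apply: (ip_wsum_op (f := id)).
by rewrite -subr_ge0 gram -kformB; apply: kform_ge0.
Qed.

Lemma Q_herm s t : Q t s = (Q s t)^*.
Proof.
exact: form_herm (kformDl phi) (kformDr phi) (kformZl phi) (kformZr phi)
  (fun s => kform_ge0 s phi_psd) s t.
Qed.

Lemma normc_Q_le s t : normc (Q s t) <= nrm (wsum s) * nrm (wsum t).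
Proof.
have Q_ge0 u : 0 <= Q u u by apply: kform_ge0.
apply: ler_of_sqr; first by rewrite mulr_ge0 ?hnorm_ge0.
apply: le_trans (form_CS (kformDl phi) (kformDr phi) (kformZl phi) (kformZr phi) Q_ge0 s t) _.
rewrite exprMn !sqr_hnorm.
by apply: ler_pM; [exact: ler_Re (Q_ge0 s) | exact: ler_Re (Q_ge0 t) | exact/ler_Re/Q_le_gram ..].
Qed.

Lemma kernel_vec_ex s : exists y,
  [/\ in_K y, forall u, ip (wsum u) y = Q u s & nrm y <= nrm (wsum s)].
Proof.
apply: (riesz_span [::] wsum_cat wsum_scale _ _ (hnorm_ge0 _)) => [u v|c u|u].
- exact: kformDl.
- exact: kformZl.
- by rewrite mulrC; apply: normc_Q_le.
Qed.

Definition kernel_vec s := sval (cid (kernel_vec_ex s)).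
Local Notation Y := kernel_vec.

Lemma Y_repr u s : ip (wsum u) (Y s) = Q u s.
Proof. by case: (svalP (cid (kernel_vec_ex s))). Qed.
Lemma Y_le s : nrm (Y s) <= nrm (wsum s).
Proof. by case: (svalP (cid (kernel_vec_ex s))). Qed.
Lemma Y_cat s t : Y (s ++ t) = Y s + Y t.
Proof. by apply: wsum_ip_inj => u; rewrite ipDr !Y_repr kformDr. Qed.
Lemma Y_scale c s : Y (wscale c s) = c *: Y s.
Proof. by apply: wsum_ip_inj => u; rewrite ipZr !Y_repr kformZr. Qed.

Lemma kernel_op_ex x : exists z,
  [/\ in_K z, forall s, ip (wsum s) z = ip (Y s) x & nrm z <= nrm x].
Proof.
apply: (riesz_span [::] wsum_cat wsum_scale _ _ (hnorm_ge0 x)) => [s t|c s|s].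
- by rewrite Y_cat ipDl.
- by rewrite Y_scale ipZl.
- apply: le_trans (normc_ip_le _ _) _; rewrite mulrC.
  by apply: ler_wpM2l; [apply: hnorm_ge0 | apply: Y_le].
Qed.

Definition kernel_op x := sval (cid (kernel_op_ex x)).
Local Notation A := kernel_op.

Lemma A_repr s x : ip (wsum s) (A x) = ip (Y s) x.
Proof. by case: (svalP (cid (kernel_op_ex x))). Qed.
Lemma A_le x : nrm (A x) <= nrm x.
Proof. by case: (svalP (cid (kernel_op_ex x))). Qed.

Lemma A_lin : linear_op A.
Proof. by move=> a x y; apply: wsum_ip_inj => s; rewrite ipDr ipZr !A_repr ipl. Qed.

Lemma A_bounded : bounded_op ip A.
Proof. by split; [apply: A_lin | exists 1 => x; rewrite mul1r A_le]. Qed.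

Lemma A_wsum s t : ip (wsum s) (A (wsum t)) = Q s t.
Proof. by rewrite A_repr ipc Y_repr Q_herm conjCK. Qed.

Lemma A_phi xi eta : D xi -> D eta -> phi xi eta = phiA ip W psi A xi eta.
Proof.
move=> Dxi Deta; rewrite /phiA -(wsum1 Dxi) -(wsum1 Deta) A_wsum.
by rewrite /kform !big_seq1 /= rmorph1 !mul1r.
Qed.

Lemma A_between : op_between_0_I ip A.
Proof.
move=> x; split.
  apply: (@ip_op_ge0 A 1 A_lin) => [z|s]; first by rewrite mul1r A_le.
  by rewrite A_wsum; apply: kform_ge0.
rewrite -subr_ge0 -ipBr.
apply: (@ip_op_ge0 (fun z => z - A z) 2) => [a y z|z|s] /=.
- by rewrite A_lin scalerBr opprD addrACA.
- apply: le_trans (hnormD _ _) _; rewrite hnormN.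
  by have := A_le z; lra.
- by rewrite ipBr A_wsum subr_ge0; apply: Q_le_gram.
Qed.

Lemma A_unique B : bounded_op ip B ->
  (forall xi eta, D xi -> D eta -> phi xi eta = phiA ip W psi B xi eta) -> B = A.
Proof.
move=> B_bounded B_phi; apply: (bounded_op_eq B_bounded A_bounded) => t.
apply: wsum_ip_inj => s.
by rewrite A_wsum (ip_wsum_op (proj1 B_bounded) B_phi).
Qed.

Lemma kernel_representation :
  (exists A : H -> H,
     [/\ bounded_op ip A, op_between_0_I ip A,
         (forall xi eta, D xi -> D eta -> phi xi eta = phiA ip W psi A xi eta) &
         (forall B : H -> H, bounded_op ip B -> op_between_0_I ip B ->
            (forall xi eta, D xi -> D eta -> phi xi eta = phiA ip W psi B xi eta) ->
            B = A)])
  /\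
  (exists f : 'rV[R]_d -> 'rV[R]_d -> C,
     (forall xi eta, D xi -> D eta -> f xi eta = phi xi eta) /\
     (forall xi0 eta0 (e : R), 0 < e -> exists2 delta : R, 0 < delta &
        forall xi eta, rv_close xi xi0 delta -> rv_close eta eta0 delta ->
          `|f xi eta - f xi0 eta0| < e%:C%C)).
Proof.
split.
  exists A; split; [exact: A_bounded | exact: A_between | exact: A_phi |].
  by move=> B B_bounded _; apply: A_unique.
exists (phiA ip W psi A); split; last exact: phiA_continuous A_lin A_le.
by move=> xi eta Dxi Deta; rewrite -A_phi.
Qed.
End Kernel.
End WeylSpan.
End InnerProductSpace.

Theorem lemma2 (R : realType) (d : nat) (S : 'M[R]_d)
  (H : lmodType R[i]) (ip : H -> H -> R[i]) (W : 'rV[R]_d -> H -> H) (psi : H)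
  (D : 'rV[R]_d -> Prop) (phi : 'rV[R]_d -> 'rV[R]_d -> R[i]) :
  S^T = - S ->
  is_hilbert ip ->
  ccr_rep ip S W ->
  hnorm ip psi = 1 ->
  cyclic_vec ip W psi ->
  dense_rv D ->
  psd_kernel D phi ->
  psd_kernel D (fun xi eta => phiA ip W psi id xi eta - phi xi eta) ->
  (exists A : H -> H,
     [/\ bounded_op ip A, op_between_0_I ip A,
         (forall xi eta, D xi -> D eta -> phi xi eta = phiA ip W psi A xi eta) &
         (forall B : H -> H, bounded_op ip B -> op_between_0_I ip B ->
            (forall xi eta, D xi -> D eta -> phi xi eta = phiA ip W psi B xi eta) ->
            B = A)])
  /\
  (exists f : 'rV[R]_d -> 'rV[R]_d -> R[i],
     (forall xi eta, D xi -> D eta -> f xi eta = phi xi eta) /\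
     (forall xi0 eta0 (e : R), 0 < e -> exists2 delta : R, 0 < delta &
        forall xi eta, rv_close xi xi0 delta -> rv_close eta eta0 delta ->
          `|f xi eta - f xi0 eta0| < (e%:C)%C)).
Proof.
move=> S_skew [ipl ipc ip_ge0 ip_eq0 ip_complete] [W_lin W_ip W_surj W_mul W_cont].
move=> psi_unit psi_cyclic D_dense phi_psd gram_sub_phi_psd.
exact: (kernel_representation ipl ipc ip_ge0 ip_eq0 ip_complete S_skew
  W_lin W_ip W_surj W_mul W_cont psi_unit psi_cyclic D_dense phi_psd gram_sub_phi_psd).
Qed.
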